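(* Let $H$ be a Hilbert space and $T$ a densely defined closed operator on $H$ with closed range. Then $T$ is selfadjoint if and only if $w(T)$ is selfadjoint.
   Context: For a densely defined closed operator $A$ with closed range, $C(A)=D(A)\cap N(A)^{\perp}$, and the Moore–Penrose inverse $A^{\dagger}$ is defined on $R(A)\oplus^{\perp}R(A)^{\perp}$ by $A^{\dagger}y=(A|_{C(A)})^{-1}y$ for $y\in R(A)$ and $A^{\dagger}y=0$ for $y\in R(A)^{\perp}$. The generalized Cauchy dual is $w(A)=A(A^{*}A)^{\dagger}$ (products on natural domains). *)

(* MathComp + MathComp-Analysis, scalars R[i] (complex numbers
   over a real type R, from mathcomp-real-closed). Unbounded operators are
   represented by their graphs (subsets of H * H). *)
From HB Require Import structures.
From mathcomp Require Import all_boot all_order all_algebra.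
From mathcomp Require Import complex.
From mathcomp Require Import all_classical all_reals topology normedtype sequences.

Set Implicit Arguments.
Unset Strict Implicit.
Unset Printing Implicit Defensive.
Import Order.TTheory GRing.Theory Num.Theory.
Import numFieldNormedType.Exports.
Local Open Scope ring_scope.
Local Open Scope classical_set_scope.

Section HilbertOps.
Variables (R : realType) (H : lmodType R[i]) (ip : H -> H -> R[i]).

Definition is_inner_product : Prop :=
  [/\ (forall (a : R[i]) (x y z : H), ip (a *: x + y) z = a * ip x z + ip y z),
      (forall x y : H, ip y x = conjc (ip x y)),
      (forall x : H, 0 <= ip x x) &
      (forall x : H, ip x x = 0 -> x = 0)].

Definition hnormsq (x : H) : R := complex.Re (ip x x).

Definition hconv (u : nat -> H) (x : H) : Prop :=
  (fun n => hnormsq (u n - x)) @ \oo --> (0 : R).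

Definition hcauchy (u : nat -> H) : Prop :=
  forall e : R, 0 < e -> exists N : nat, forall m n : nat,
    (N <= m)%N -> (N <= n)%N -> hnormsq (u m - u n) < e.

Definition is_hilbert : Prop :=
  is_inner_product /\ forall u, hcauchy u -> exists x, hconv u x.

Definition is_operator (A : set (H * H)) : Prop :=
  [/\ A (0, 0),
      (forall (a : R[i]) p q, A p -> A q -> A (a *: p.1 + q.1, a *: p.2 + q.2)) &
      (forall x y z, A (x, y) -> A (x, z) -> y = z)].

Definition dom (A : set (H * H)) : set H := [set x | exists y, A (x, y)].
Definition ran (A : set (H * H)) : set H := [set y | exists x, A (x, y)].
Definition ker (A : set (H * H)) : set H := [set x | A (x, 0)].
Definition orth (S : set H) : set H := [set y | forall x, S x -> ip x y = 0].

Definition seq_closed (S : set H) : Prop :=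
  forall u x, (forall n, S (u n)) -> hconv u x -> S x.

Definition densely_defined (A : set (H * H)) : Prop :=
  forall x, exists u : nat -> H, (forall n, dom A (u n)) /\ hconv u x.

Definition closed_operator (A : set (H * H)) : Prop :=
  forall (u v : nat -> H) x y, (forall n, A (u n, v n)) ->
    hconv u x -> hconv v y -> A (x, y).

Definition closed_range (A : set (H * H)) : Prop := seq_closed (ran A).

Definition adjoint (A : set (H * H)) : set (H * H) :=
  [set p | forall x y, A (x, y) -> ip y p.1 = ip x p.2].

Definition selfadjoint (A : set (H * H)) : Prop := A = adjoint A.

Definition opcomp (A B : set (H * H)) : set (H * H) :=
  [set p | exists z, B (p.1, z) /\ A (z, p.2)].

Definition carrier (A : set (H * H)) : set H := dom A `&` orth (ker A).

(** Moore–Penrose inverse on R(A) ⊕ R(A)^⊥ :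
    A†(y1 + y2) = (A|C(A))^{-1} y1 for y1 ∈ R(A), y2 ∈ R(A)^⊥ *)
Definition mp_inverse (A : set (H * H)) : set (H * H) :=
  [set p | exists y1 y2, [/\ p.1 = y1 + y2, orth (ran A) y2,
                             carrier A p.2 & A (p.2, y1)]].

(** generalized Cauchy dual w(A) = A (A* A)† *)
Definition cauchy_dual (A : set (H * H)) : set (H * H) :=
  opcomp A (mp_inverse (opcomp (adjoint A) A)).

End HilbertOps.

From HB Require Import structures.
From mathcomp Require Import all_boot all_order all_algebra.
From mathcomp Require Import complex.
From mathcomp Require Import all_classical all_reals topology normedtype sequences.
From mathcomp Require Import interval_inference lra.

(** T† is everywhere defined and single-valued, because the closedness of
    T and of R(T) gives H = R(T) ⊕ R(T)^⊥ = N(T) ⊕ C(T); as w(T) is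
    single-valued too, T† ⊆ w(T) forces w(T) = T†.
    Von Neumann's decomposition (h, 0) = (x, Tx) + (T*Tx, -Tx) in H ⊕ H shows
    R(T*T)^⊥ ⊆ N(T), whence T† ⊆ w(T)* always, so w(T) = w(T)* gives
    w(T) = T†. If T = T*, then N(T) = R(T)^⊥ and C(T) = R(T), and T† ⊆ w(T)
    can be checked directly, so again w(T) = T†. Finally T is selfadjoint iff
    T† is: T = T* makes T† a symmetric everywhere defined operator, and
    conversely symmetry of T† yields N(T) = R(T)^⊥ (using that D(T) is
    dense), then symmetry of T and T* ⊆ T. *)

Set Implicit Arguments.
Unset Strict Implicit.
Unset Printing Implicit Defensive.
Import Order.TTheory GRing.Theory Num.Theory.
Import numFieldNormedType.Exports.
Local Open Scope ring_scope.
Local Open Scope classical_set_scope.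
Local Open Scope complex_scope.
Local Notation Re := complex.Re.
Local Notation Im := complex.Im.

Section ComplexParts.
Variable R : realType.
Implicit Types z w : R[i].

Lemma ReD z w : Re (z + w) = Re z + Re w.
Proof. by case: z; case: w. Qed.

Lemma ReN z : Re (- z) = - Re z.
Proof. by case: z. Qed.

Lemma Re_conj z : Re (conjc z) = Re z.
Proof. by case: z. Qed.

Lemma Re_realM (t : R) z : Re (t%:C * z) = t * Re z.
Proof. by case: z => a b /=; rewrite mul0r subr0. Qed.

Lemma Re_iM z : Re ('i * z) = - Im z.
Proof. by case: z => a b /=; rewrite mul0r mul1r sub0r. Qed.

Lemma ge0_complexE z : 0 <= z -> z = (Re z)%:C /\ 0 <= Re z.
Proof. by case: z => a b; rewrite lecE /= => /andP[/eqP -> ?]. Qed.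

Lemma complex_eq0 z : Re z = 0 -> Im z = 0 -> z = 0.
Proof. by case: z => a b /= -> ->. Qed.

End ComplexParts.

Lemma linear_le_quadratic_eq0 (R : realFieldType) (b c : R) :
  0 <= c -> (forall t, 2 * t * b <= t ^+ 2 * c) -> b = 0.
Proof.
move=> c0 le_bc; pose t := b / (c + 1).
have tE : t * (c + 1) = b by rewrite mulfVK // gt_eqF // ltr_wpDl.
have := le_bc t; rewrite expr2 -tE => le_t.
suff -> : t = 0 by rewrite mul0r.
apply/eqP; rewrite -sqrf_eq0 eq_le sqr_ge0 andbT; nra.
Qed.

Section Subspace.
Variables (R : realType) (V : lmodType R[i]).

Definition is_subspace (S : set V) : Prop :=
  S 0 /\ forall (a : R[i]) p q, S p -> S q -> S (a *: p + q).

Variables (S : set V) (subS : is_subspace S).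

Lemma subspace0 : S 0.
Proof. by case: subS. Qed.

Lemma subspaceD p q : S p -> S q -> S (p + q).
Proof. by move=> Sp Sq; rewrite -[p]scale1r; apply: subS.2. Qed.

Lemma subspaceZ a p : S p -> S (a *: p).
Proof. by move=> Sp; rewrite -[_ *: _]addr0; apply: subS.2 => //; apply: subspace0. Qed.

Lemma subspaceB p q : S p -> S q -> S (p - q).
Proof. by move=> Sp Sq; rewrite -scaleN1r; apply: subspaceD => //; apply: subspaceZ. Qed.

End Subspace.

Section Graph.
Variables (R : realType) (V : lmodType R[i]) (A : set (V * V)).

Lemma operator_subspace : is_operator A -> is_subspace A.
Proof. by case. Qed.

Lemma operator_functional x y z : is_operator A -> A (x, y) -> A (x, z) -> y = z.
Proof. by case=> _ _; apply. Qed.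

Hypothesis subA : is_subspace A.

Lemma graphD x y x' y' : A (x, y) -> A (x', y') -> A (x + x', y + y').
Proof. by move=> Axy Axy'; apply: (subspaceD subA Axy Axy'). Qed.

Lemma graphZ a x y : A (x, y) -> A (a *: x, a *: y).
Proof. by move=> Axy; apply: (subspaceZ subA a Axy). Qed.

Lemma graphB x y x' y' : A (x, y) -> A (x', y') -> A (x - x', y - y').
Proof. by move=> Axy Axy'; apply: (subspaceB subA Axy Axy'). Qed.

Lemma graph_ker_cancel n c y : A (n + c, y) -> ker A n -> A (c, y).
Proof. by move=> Ay An; have := graphB Ay An; rewrite subr0 addrAC subrr add0r. Qed.

Lemma ran_subspace : is_subspace (ran A).
Proof.
split=> [|a p q [x Axp] [x' Axq]]; first by exists 0; apply: subspace0 subA.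
by exists (a *: x + x'); apply: (subA.2 a (x, p) (x', q)).
Qed.

Lemma ker_subspace : is_subspace (ker A).
Proof.
split=> [|a p q Ap Aq]; first exact: subspace0 subA.
by have := graphD (graphZ a Ap) Aq; rewrite scaler0 addr0.
Qed.

Lemma opcomp_subspace (B : set (V * V)) : is_subspace B -> is_subspace (opcomp B A).
Proof.
move=> subB; split=> [|a [x w] [x' w'] [z [Axz Bzw]] [z' [Axz' Bzw']]].
  by exists 0; split; [apply: subspace0 subA | apply: subspace0 subB].
exists (a *: z + z'); split; first exact: (subA.2 a (x, z) (x', z')).
exact: (subB.2 a (z, w) (z', w')).
Qed.

End Graph.

Section InnerProduct.
Variables (R : realType) (V : lmodType R[i]) (ip : V -> V -> R[i]).
Hypothesis ipP : is_inner_product ip.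
Local Notation nsq := (hnormsq ip).

Lemma ipDl x y z : ip (x + y) z = ip x z + ip y z.
Proof. by case: ipP => lin _ _ _; have := lin 1 x y z; rewrite scale1r mul1r. Qed.

Lemma ip0l x : ip 0 x = 0.
Proof. by apply: (addrI (ip 0 x)); rewrite -ipDl !addr0. Qed.

Lemma ipZl a x z : ip (a *: x) z = a * ip x z.
Proof. by case: ipP => lin _ _ _; rewrite -[a *: x]addr0 lin ip0l addr0. Qed.

Lemma ipC x y : ip y x = conjc (ip x y).
Proof. by case: ipP. Qed.

Lemma ip0r x : ip x 0 = 0.
Proof. by rewrite ipC ip0l rmorph0. Qed.

Lemma ipDr x y z : ip x (y + z) = ip x y + ip x z.
Proof. by rewrite ipC ipDl rmorphD /= -!ipC. Qed.

Lemma ipZr a x y : ip x (a *: y) = conjc a * ip x y.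
Proof. by rewrite ipC ipZl rmorphM /= -ipC. Qed.

Lemma ipNr x y : ip x (- y) = - ip x y.
Proof. by rewrite -scaleN1r ipZr rmorphN1 mulN1r. Qed.

Lemma ipBr x y z : ip x (y - z) = ip x y - ip x z.
Proof. by rewrite ipDr ipNr. Qed.

Lemma ipNl x y : ip (- x) y = - ip x y.
Proof. by rewrite -scaleN1r ipZl mulN1r. Qed.

Lemma ip_ge0 x : 0 <= ip x x.
Proof. by case: ipP. Qed.

Lemma ip_eq0 x : ip x x = 0 -> x = 0.
Proof. by case: ipP => _ _ _; apply. Qed.

Lemma ip_hnormsq x : ip x x = (nsq x)%:C.
Proof. exact: (ge0_complexE (ip_ge0 x)).1. Qed.

Lemma hnormsq_ge0 x : 0 <= nsq x.
Proof. exact: (ge0_complexE (ip_ge0 x)).2. Qed.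

Lemma hnormsq_eq0 x : nsq x = 0 -> x = 0.
Proof. by move=> x0; apply: ip_eq0; rewrite ip_hnormsq x0. Qed.

Lemma Re_ipC x y : Re (ip y x) = Re (ip x y).
Proof. by rewrite ipC Re_conj. Qed.

Lemma Re_ipZl (t : R) x y : Re (ip (t%:C *: x) y) = t * Re (ip x y).
Proof. by rewrite ipZl Re_realM. Qed.

Lemma Re_ipZr (t : R) x y : Re (ip x (t%:C *: y)) = t * Re (ip x y).
Proof. by rewrite Re_ipC Re_ipZl Re_ipC. Qed.

Lemma hnormsqD x y : nsq (x + y) = nsq x + nsq y + 2 * Re (ip x y).
Proof. rewrite /hnormsq !ipDl !ipDr !ReD [Re (ip y x)]Re_ipC; lra. Qed.

Lemma hnormsqN x : nsq (- x) = nsq x.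
Proof. by rewrite /hnormsq ipNl ipNr opprK. Qed.

Lemma hnormsqB x y : nsq (x - y) = nsq x + nsq y - 2 * Re (ip x y).
Proof. by rewrite hnormsqD hnormsqN ipNr ReN mulrN. Qed.

Lemma hnormsqZ (t : R) x : nsq (t%:C *: x) = t ^+ 2 * nsq x.
Proof. by rewrite /hnormsq Re_ipZl ipZr conjc_real Re_realM mulrA -expr2. Qed.

Lemma parallelogram x y : nsq (x + y) + nsq (x - y) = 2 * nsq x + 2 * nsq y.
Proof. rewrite hnormsqD hnormsqB; lra. Qed.

Lemma hnormsqD_le (eta : R) x y : 0 < eta ->
  eta * nsq (x + y) <= eta * (1 + eta) * nsq x + (1 + eta) * nsq y.
Proof.
move=> eta0; have := hnormsq_ge0 (eta%:C *: x - y).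
rewrite hnormsqB hnormsqZ Re_ipZl hnormsqD; nra.
Qed.

Lemma hconvP u x : hconv ip u x <->
  forall e, 0 < e -> exists N, forall n, (N <= n)%N -> nsq (u n - x) < e.
Proof.
rewrite /hconv cvgrPdist_lt; split=> cvg_u e e0.
  have [N _ uN] := cvg_u e e0; exists N => n /uN /=.
  by rewrite sub0r normrN ger0_norm // hnormsq_ge0.
have [N uN] := cvg_u e e0; exists N => // n /= /uN.
by rewrite sub0r normrN ger0_norm // hnormsq_ge0.
Qed.

Lemma hconv_cst x : hconv ip (fun=> x) x.
Proof. by apply/hconvP => e e0; exists 0%N => n _; rewrite subrr /hnormsq ip0l. Qed.

Lemma orth_subspace S : is_subspace (orth ip S).
Proof.
split=> [x _|a p q Sp Sq x Sx]; first exact: ip0r.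
by rewrite ipDr ipZr Sp // Sq // mulr0 addr0.
Qed.

Lemma orth_ip S x y : orth ip S x -> S y -> ip x y = 0.
Proof. by move=> Sx Sy; rewrite ipC Sx // rmorph0. Qed.

Lemma orth_eq0 S x : S x -> orth ip S x -> x = 0.
Proof. by move=> Sx /(_ x Sx) /ip_eq0. Qed.

Lemma dense_orth_eq0 A m : densely_defined ip A -> orth ip (dom A) m -> m = 0.
Proof.
move=> denseA m_orth; have [u [domu /hconvP um]] := denseA m.
apply: hnormsq_eq0; apply/eqP; rewrite eq_le hnormsq_ge0 andbT leNgt.
apply/negP => /um [N /(_ N (leqnn N))].
rewrite hnormsqB (m_orth _ (domu N)).
have := hnormsq_ge0 (u N); lra.
Qed.

Lemma ker_seq_closed A : closed_operator ip A -> seq_closed ip (ker A).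
Proof. by move=> Acl u x Au ux; apply: Acl Au ux (hconv_cst 0). Qed.

Lemma adjoint_subspace A : is_subspace (adjoint ip A).
Proof.
split=> [x y _ /=|a [u v] [u' v'] /= Auv Auv' x y Axy /=]; first by rewrite !ip0r.
by rewrite !ipDr !ipZr (Auv _ _ Axy) (Auv' _ _ Axy).
Qed.

Lemma adjoint_functional A u v v' : (forall y, exists a, A (y, a)) ->
  adjoint ip A (u, v) -> adjoint ip A (u, v') -> v = v'.
Proof.
move=> totA Auv Auv'; have [a Aa] := totA (v - v').
have /eqP := Auv _ _ Aa; rewrite (Auv' _ _ Aa) /= eq_sym -subr_eq0 -ipBr.
by move=> /eqP /ip_eq0 /eqP; rewrite subr_eq0 => /eqP.
Qed.

Lemma mp_inverse_functional A y a a' : is_subspace A ->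
  mp_inverse ip A (y, a) -> mp_inverse ip A (y, a') -> a = a'.
Proof.
move=> subA [y1 [y2 [/= -> y2_orth [_ a_orth] Aay1]]].
move=> [y1' [y2' [/= yE y2'_orth [_ a'_orth] Aa'y1']]].
have Ay : A (a - a', y1 - y1') by apply: graphB.
have y1E : y1 - y1' = y2' - y2.
  by apply/eqP; rewrite subr_eq addrAC [y2' + y1']addrC -yE addrK.
have y10 : y1 - y1' = 0.
  apply: (orth_eq0 (S := ran A)); first by exists (a - a').
  by rewrite y1E; exact: (subspaceB (orth_subspace _) y2'_orth y2_orth).
rewrite y10 in Ay; apply/eqP; rewrite -subr_eq0; apply/eqP.
exact: (orth_eq0 Ay (subspaceB (orth_subspace _) a_orth a'_orth)).
Qed.

Lemma mp_inverse_carrier A c : carrier ip A c -> exists y, A (c, y) /\ mp_inverse ip A (y, c).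
Proof.
move=> cc; have [[y Acy] _] := cc; exists y; split=> //.
by exists y, 0; split=> //=; [rewrite addr0 | apply: subspace0 (orth_subspace _)].
Qed.

Lemma mp_inverse_orth_ran A r : is_subspace A -> orth ip (ran A) r -> mp_inverse ip A (r, 0).
Proof.
move=> subA r_orth; have A00 := subspace0 subA.
exists 0, r; split=> //=; first by rewrite add0r.
by split; [exists 0 | apply: subspace0 (orth_subspace _)].
Qed.

Lemma minimizing_seq_cauchy (K : set V) h (d : R) (ks : nat -> V) :
  is_subspace K -> (forall k, K k -> d <= nsq (h - k)) ->
  (forall n, K (ks n)) -> (forall n, nsq (h - ks n) < d + n.+1%:R^-1) ->
  hcauchy ip ks.
Proof.
move=> subK d_le Kks ks_d e e0.
have e4 : 0 < e / 4 by lra.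
have [N _ Ninv] := near_infty_natSinv_lt (PosNum e4).
exists N => m n Nm Nn.
pose mid := (2^-1 : R)%:C *: (ks m + ks n).
have Kmid : K mid by apply/(subspaceZ subK)/(subspaceD subK).
have sumE : (h - ks m) + (h - ks n) = (2 : R)%:C *: (h - mid).
  rewrite scalerBr scalerA -rmorphM mulfV ?pnatr_eq0 // scale1r.
  rewrite rmorph_nat scaler_nat mulr2n opprD !addrA; congr (_ - _).
  by rewrite addrAC.
have diffE : (h - ks m) - (h - ks n) = - (ks m - ks n).
  by rewrite [h - ks m]addrC addrKA opprB opprK addrC.
have := parallelogram (h - ks m) (h - ks n).
rewrite sumE diffE hnormsqZ hnormsqN.
have := d_le _ Kmid; have := Ninv m Nm; have := Ninv n Nn.
have := ks_d m; have := ks_d n; rewrite /=; move: (m.+1%:R^-1) (n.+1%:R^-1) => a b; lra.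
Qed.

Lemma hnormsq_le_of_hconv (u : nat -> V) x h (d : R) : hconv ip u x ->
  (forall n, nsq (h - u n) < d + n.+1%:R^-1) -> nsq (h - x) <= d.
Proof.
move=> /hconvP ux u_d; apply/ler_addgt0Pr => e e0.
have d1 : -1 < d by have := u_d 0%N; have := hnormsq_ge0 (h - u 0%N); rewrite invr1; lra.
pose eta := e / (e + d + 4).
have etaE : eta * (e + d + 4) = e by rewrite /eta mulfVK // gt_eqF //; lra.
have eta0 : 0 < eta by apply: divr_gt0 => //; lra.
have eta1 : eta <= 1 by rewrite /eta ler_pdivrMr; lra.
have [N1 N1u] := ux (eta * eta) (mulr_gt0 eta0 eta0).
have [N2 _ N2inv] := near_infty_natSinv_lt (PosNum eta0).
pose n := maxn N1 N2.
have un := N1u n (leq_maxl _ _); have inv_n := N2inv n (leq_maxr _ _).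
have := hnormsqD_le (h - u n) (u n - x) eta0.
rewrite addrA subrK; have := u_d n; have := hnormsq_ge0 (h - x).
move: inv_n => /=; move: (n.+1%:R^-1) => a; nra.
Qed.

Lemma minimizer_orth (K : set V) h k : is_subspace K -> K k ->
  (forall k', K k' -> nsq (h - k) <= nsq (h - k')) -> orth ip K (h - k).
Proof.
move=> subK Kk k_min.
have Re0 x : K x -> Re (ip x (h - k)) = 0.
  move=> Kx; apply: (linear_le_quadratic_eq0 (hnormsq_ge0 x)) => t.
  have := k_min _ (subspaceD subK Kk (subspaceZ subK t%:C Kx)).
  by rewrite opprD addrA [nsq (h - k - _)]hnormsqB hnormsqZ Re_ipZr Re_ipC; lra.
move=> x Kx; apply: complex_eq0; first exact: Re0.
have := Re0 _ (subspaceZ subK 'i Kx); rewrite ipZl Re_iM.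
by move/eqP; rewrite oppr_eq0 => /eqP.
Qed.

End InnerProduct.

Section PairSpace.
Variables (R : realType) (V : lmodType R[i]) (ip : V -> V -> R[i]).
Local Notation nsq := (hnormsq ip).

Definition ip_pair (p q : V * V) : R[i] := ip p.1 q.1 + ip p.2 q.2.

Lemma hnormsq_pair p : hnormsq ip_pair p = nsq p.1 + nsq p.2.
Proof. by rewrite /hnormsq /ip_pair ReD. Qed.

Hypothesis ipP : is_inner_product ip.

Lemma ip_pair_inner_product : is_inner_product ip_pair.
Proof.
split.
- by move=> a p q r; rewrite /ip_pair /= !(ipDl ipP) !(ipZl ipP) mulrDr addrACA.
- by move=> p q; rewrite /ip_pair rmorphD /= -!(ipC ipP).
- by move=> p; rewrite /ip_pair addr_ge0 // ip_ge0.
- case=> x y; rewrite /ip_pair /= => /eqP; rewrite paddr_eq0 ?ip_ge0 //.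
  by case/andP => /eqP /(ip_eq0 ipP) -> /eqP /(ip_eq0 ipP) ->.
Qed.

Lemma hconv_pairP (u : nat -> V * V) p : hconv ip_pair u p <->
  hconv ip (fun n => (u n).1) p.1 /\ hconv ip (fun n => (u n).2) p.2.
Proof.
have nsq_pair := hnormsq_pair; have nsq0 := hnormsq_ge0 ipP.
rewrite !(hconvP ipP) (hconvP ip_pair_inner_product); split.
  move=> up; split=> e /up [N uN]; exists N => n /uN; rewrite nsq_pair /=.
    by have := nsq0 ((u n).2 - p.2); lra.
  by have := nsq0 ((u n).1 - p.1); lra.
case=> [u1 u2] e e0; have e2 : 0 < e / 2 by lra.
have [N1 uN1] := u1 _ e2; have [N2 uN2] := u2 _ e2.
exists (maxn N1 N2) => n; rewrite geq_max => /andP[/uN1 ? /uN2 ?].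
by rewrite nsq_pair /=; lra.
Qed.

Lemma graph_seq_closed (A : set (V * V)) : closed_operator ip A -> seq_closed ip_pair A.
Proof. by move=> Acl u [x y] Au /hconv_pairP[ux uy]; apply: Acl ux uy => n; case: (u n) (Au n). Qed.

End PairSpace.

Lemma ip_pair_hilbert (R : realType) (V : lmodType R[i]) (ip : V -> V -> R[i]) :
  is_hilbert ip -> is_hilbert (ip_pair ip).
Proof.
move=> hilbP; have ipP := hilbP.1; have nsq0 := hnormsq_ge0 ipP.
split=> [|u u_cauchy]; first exact: ip_pair_inner_product.
have u1_cauchy : hcauchy ip (fun n => (u n).1).
  move=> e /u_cauchy [N uN]; exists N => m n Nm Nn.
  by have := uN m n Nm Nn; rewrite hnormsq_pair /=; have := nsq0 ((u m).2 - (u n).2); lra.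
have u2_cauchy : hcauchy ip (fun n => (u n).2).
  move=> e /u_cauchy [N uN]; exists N => m n Nm Nn.
  by have := uN m n Nm Nn; rewrite hnormsq_pair /=; have := nsq0 ((u m).1 - (u n).1); lra.
have [x1 ux1] := hilbP.2 _ u1_cauchy; have [x2 ux2] := hilbP.2 _ u2_cauchy.
by exists (x1, x2); apply/(hconv_pairP ipP).
Qed.

Section Hilbert.
Variables (R : realType) (V : lmodType R[i]) (ip : V -> V -> R[i]).
Hypothesis hilbP : is_hilbert ip.
Let ipP : is_inner_product ip := hilbP.1.
Local Notation nsq := (hnormsq ip).

Lemma exists_minimizer (K : set V) h : is_subspace K -> seq_closed ip K ->
  exists2 k, K k & forall k', K k' -> nsq (h - k) <= nsq (h - k').
Proof.
move=> subK Kcl; pose S := [set nsq (h - k) | k in K].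
have S_inf : has_inf S.
  split; first by exists (nsq (h - 0)), 0 => //; apply: subspace0.
  by exists 0 => _ [k _ <-]; apply: hnormsq_ge0.
have d_le k : K k -> inf S <= nsq (h - k) by move=> Kk; apply: (ge_inf S_inf.2); exists k.
have ks_ex n : exists k, K k /\ nsq (h - k) < inf S + n.+1%:R^-1.
  have inv_gt0 : 0 < n.+1%:R^-1 :> R by rewrite invr_gt0 ltr0Sn.
  by have [_ [k Kk <-] ?] := inf_adherent inv_gt0 S_inf; exists k.
have [ks ksP] := choice ks_ex.
have Kks n : K (ks n) by case: (ksP n).
have ks_d n : nsq (h - ks n) < inf S + n.+1%:R^-1 by case: (ksP n).
have [k ksk] := hilbP.2 ks (minimizing_seq_cauchy ipP subK d_le Kks ks_d).
exists k; first exact: Kcl ks k Kks ksk.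
by move=> k' Kk'; apply: le_trans (d_le _ Kk'); exact: (hnormsq_le_of_hconv ipP ksk ks_d).
Qed.

Lemma orth_decomposition (K : set V) h : is_subspace K -> seq_closed ip K ->
  exists k r, [/\ h = k + r, K k & orth ip K r].
Proof.
move=> subK Kcl; have [k Kk k_min] := exists_minimizer h subK Kcl.
by exists k, (h - k); split; [rewrite addrC subrK | | exact: minimizer_orth].
Qed.

Lemma orth_orth_sub (M : set V) z : is_subspace M -> seq_closed ip M ->
  orth ip (orth ip M) z -> M z.
Proof.
move=> subM Mcl z_orth; have [m [r [zE Mm r_orth]]] := orth_decomposition z subM Mcl.
suff r0 : r = 0 by rewrite zE r0 addr0.
apply: (ip_eq0 ipP); have := z_orth r r_orth.
by rewrite zE (ipDr ipP) (orth_ip ipP r_orth Mm) add0r.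
Qed.

Lemma ker_decomposition (A : set (V * V)) x : is_subspace A -> closed_operator ip A ->
  exists n c, [/\ x = n + c, ker A n & orth ip (ker A) c].
Proof.
by move=> subA Acl; apply: orth_decomposition (ker_subspace subA) (ker_seq_closed ipP Acl).
Qed.

Lemma graph_ker_decomposition (A : set (V * V)) x y :
  is_subspace A -> closed_operator ip A -> A (x, y) ->
  exists n c, [/\ x = n + c, ker A n, A (c, y) & carrier ip A c].
Proof.
move=> subA Acl Axy; have [n [c [xE An c_orth]]] := ker_decomposition x subA Acl.
rewrite xE in Axy; have Acy := graph_ker_cancel subA Axy An.
by exists n, c; split=> //; split=> //; exists y.
Qed.

Lemma mp_inverse_total (A : set (V * V)) y : is_subspace A -> closed_operator ip A ->
  closed_range ip A -> exists a, mp_inverse ip A (y, a).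
Proof.
move=> subA Acl Aran.
have [y1 [y2 [yE [x Axy1] y2_orth]]] := orth_decomposition y (ran_subspace subA) Aran.
have [_ [c [_ _ Acy1 cc]]] := graph_ker_decomposition subA Acl Axy1.
by exists c, y1, y2.
Qed.

End Hilbert.

Section VonNeumann.
Variables (R : realType) (V : lmodType R[i]) (ip : V -> V -> R[i]).
Hypothesis hilbP : is_hilbert ip.
Let ipP : is_inner_product ip := hilbP.1.

Lemma graph_adjoint_decomposition (T : set (V * V)) h :
  is_subspace T -> closed_operator ip T ->
  exists x t a, [/\ T (x, t), adjoint ip T (t, a) & h = x + a].
Proof.
move=> subT Tcl; have [[x t] [[a s] [hE Txt as_orth]]] :=
  orth_decomposition (ip_pair_hilbert hilbP) (h, 0) subT (graph_seq_closed ipP Tcl).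
have [-> sE] : h = x + a /\ 0 = t + s by case: hE.
have {}sE : s = - t by apply/eqP; rewrite -addr_eq0 addrC -sE.
exists x, t, a; split=> // x' y' Txy' /=.
have := as_orth (x', y') Txy'; rewrite /ip_pair /= sE (ipNr ipP).
by move=> /eqP; rewrite subr_eq0 => /eqP.
Qed.

Lemma orth_ran_adjoint_comp_sub_ker (T : set (V * V)) y :
  is_subspace T -> closed_operator ip T ->
  orth ip (ran (opcomp (adjoint ip T) T)) y -> ker T y.
Proof.
move=> subT Tcl y_orth.
have [x [t [a [Txt Ata yE]]]] := graph_adjoint_decomposition y subT Tcl.
have ran_a : ran (opcomp (adjoint ip T) T) a by exists x, t.
have := y_orth a ran_a; rewrite yE (ipDr ipP) (ipC ipP x a) -(Ata x t Txt) /= -(ipC ipP).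
move=> /eqP; rewrite paddr_eq0 ?(ip_ge0 ipP) //.
by case/andP => /eqP/(ip_eq0 ipP) t0 /eqP/(ip_eq0 ipP) a0; rewrite /ker a0 addr0 -t0.
Qed.

End VonNeumann.

Section CauchyDual.
Variables (R : realType) (H : lmodType R[i]) (ip : H -> H -> R[i]) (T : set (H * H)).
Hypotheses (hilbP : is_hilbert ip) (opT : is_operator T) (Tcl : closed_operator ip T)
  (Tran : closed_range ip T).
Let ipP : is_inner_product ip := hilbP.1.
Let subT : is_subspace T := operator_subspace opT.
Local Notation adj := (adjoint ip).
Local Notation T_dag := (mp_inverse ip T).
Local Notation wT := (cauchy_dual ip T).

Let dag_total y : exists a, T_dag (y, a) := mp_inverse_total hilbP y subT Tcl Tran.

Lemma cauchy_dual_functional y z z' : wT (y, z) -> wT (y, z') -> z = z'.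
Proof.
move=> [s [dag_s Tsz]] [s' [dag_s' Ts'z']].
have subS := opcomp_subspace subT (adjoint_subspace ipP T).
rewrite -(mp_inverse_functional ipP subS dag_s dag_s') in Ts'z'.
exact: operator_functional opT Tsz Ts'z'.
Qed.

Lemma cauchy_dual_eq_mp_inverse : (forall p, T_dag p -> wT p) -> wT = T_dag.
Proof.
move=> dag_sub; apply/seteqP; split=> [[y z] wyz|p /dag_sub //].
have [a dag_ya] := dag_total y.
by rewrite (cauchy_dual_functional wyz (dag_sub _ dag_ya)).
Qed.

Lemma mp_inverse_sub_adjoint_cauchy_dual p : T_dag p -> adj wT p.
Proof.
case: p => y a [y1 [y2 [/= -> y2_orth [_ a_orth] Tay1]]] y' z' [s [dag_s Tsz']].
case: dag_s => y1' [y2' [/= -> y2'_orth _ [t [Tst Aty1']]]].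
rewrite (operator_functional opT Tst Tsz') in Aty1'.
rewrite (ipDr ipP) (ipDl ipP) (y2_orth z' (ex_intro _ s Tsz')) addr0.
rewrite (a_orth y2' (orth_ran_adjoint_comp_sub_ker hilbP subT Tcl y2'_orth)) addr0.
by rewrite (ipC ipP y1 z') (Aty1' a y1 Tay1) -(ipC ipP).
Qed.

Section SelfadjointOperator.
Hypothesis Tsa : selfadjoint ip T.
Let T_adj p : T p -> adj T p. Proof. by rewrite -Tsa. Qed.
Let adj_T p : adj T p -> T p. Proof. by rewrite -Tsa. Qed.

Lemma ker_selfadjointE x : ker T x <-> orth ip (ran T) x.
Proof.
split=> [Tx0 w [x' Tx'w]|x_orth].
  by have := T_adj Tx0 Tx'w; rewrite /= (ip0r ipP).
by apply: adj_T => x' y' Tx'y' /=; rewrite (ip0r ipP) x_orth //; exists x'.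
Qed.

Lemma carrier_sub_ran a : carrier ip T a -> ran T a.
Proof.
move=> [_ a_orth]; apply: (orth_orth_sub hilbP (ran_subspace subT) Tran).
by move=> w /ker_selfadjointE /a_orth.
Qed.

Lemma mp_inverse_selfadjoint : selfadjoint ip T_dag.
Proof.
have dag_sub p : T_dag p -> adj T_dag p.
  case: p => y a [y1 [y2 [/= -> y2_orth ca Tay1]]] y' a' [y1' [y2' [/= -> y2'_orth ca' Ta'y1']]].
  rewrite (ipDr ipP) (ipDl ipP) (y2_orth a' (carrier_sub_ran ca')) addr0.
  rewrite (orth_ip ipP y2'_orth (carrier_sub_ran ca)) addr0.
  exact/esym/(T_adj Tay1).
apply/seteqP; split=> [p /dag_sub //|[u v] adj_uv].
have [a dag_ua] := dag_total u.
by rewrite (adjoint_functional ipP dag_total adj_uv (dag_sub _ dag_ua)).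
Qed.

Lemma mp_inverse_sub_cauchy_dual p : T_dag p -> wT p.
Proof.
case: p => y a [y1 [y2 [/= yE y2_orth ca Tay1]]].
have [s0 Ts0a] := carrier_sub_ran ca.
have [_ [s [_ _ Ts_a cs]]] := graph_ker_decomposition hilbP subT Tcl Ts0a.
exists s; split=> //; exists y1, y2; split=> //.
- by move=> w [x [z [Txz Azw]]]; apply: y2_orth; exists z; apply: adj_T.
- split; first by exists y1, a; split=> //; apply: T_adj.
  move=> n [z [Tnz Az0]].
  have z0 : z = 0.
    by apply: (orth_eq0 ipP (S := ran T)); [exists n | apply/ker_selfadjointE; apply: adj_T].
  by rewrite z0 in Tnz; apply: cs.2.
- by exists a; split=> //; apply: T_adj.
Qed.

End SelfadjointOperator.

Section SelfadjointMPInverse.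
Hypotheses (Tdense : densely_defined ip T) (dag_sa : selfadjoint ip T_dag).
Let dag_adj p : T_dag p -> adj T_dag p. Proof. by rewrite -dag_sa. Qed.
Let adj_dag p : adj T_dag p -> T_dag p. Proof. by rewrite -dag_sa. Qed.

Lemma ker_sub_orth_ran n : ker T n -> orth ip (ran T) n.
Proof.
move=> Tn0; have : T_dag (n, 0).
  apply: adj_dag => y a [y1 [y2 [_ _ [_ a_orth] _]]] /=.
  by rewrite (ip0r ipP) (orth_ip ipP a_orth Tn0).
move=> [y1 [y2 [/= -> y2_orth _ T0y1]]].
by rewrite (operator_functional opT T0y1 (subspace0 subT)) add0r.
Qed.

Lemma orth_ran_sub_ker r : orth ip (ran T) r -> ker T r.
Proof.
move=> r_orth; have dag_r := dag_adj (mp_inverse_orth_ran ipP subT r_orth).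
have carrier_orth c : carrier ip T c -> ip c r = 0.
  move=> cc; have [y [_ dag_yc]] := mp_inverse_carrier ipP cc.
  by have := dag_r _ _ dag_yc; rewrite /= (ip0r ipP).
have [n [m [rE Tn0 m_orth]]] := ker_decomposition hilbP r subT Tcl.
suff m0 : m = 0 by rewrite rE m0 addr0.
apply: (dense_orth_eq0 ipP Tdense) => d [yd Tdyd].
have [n' [c [-> Tn'0 _ cc]]] := graph_ker_decomposition hilbP subT Tcl Tdyd.
rewrite (ipDl ipP) (m_orth n' Tn'0) add0r.
have -> : m = r - n by rewrite rE addrAC subrr add0r.
by rewrite (ipBr ipP) (orth_ip ipP cc.2 Tn0) subr0 carrier_orth.
Qed.

Lemma orth_ker_sub_ran z : orth ip (ker T) z -> ran T z.
Proof.
move=> z_orth; apply: (orth_orth_sub hilbP (ran_subspace subT) Tran).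
by move=> w /orth_ran_sub_ker /z_orth.
Qed.

Lemma graph_symmetric x y x' y' : T (x, y) -> T (x', y') -> ip y' x = ip x' y.
Proof.
move=> Txy Tx'y'.
have [n [c [-> Tn0 Tcy cc]]] := graph_ker_decomposition hilbP subT Tcl Txy.
have [n' [c' [-> Tn'0 Tc'y' cc']]] := graph_ker_decomposition hilbP subT Tcl Tx'y'.
rewrite (ipDr ipP) (ipDl ipP).
rewrite (ker_sub_orth_ran Tn0 (ex_intro _ c' Tc'y')) add0r.
rewrite (orth_ip ipP (ker_sub_orth_ran Tn'0) (ex_intro _ c Tcy)) add0r.
have [y0 [Tcy0 dag_y0c]] := mp_inverse_carrier ipP cc.
have [y0' [Tc'y0' dag_y0'c']] := mp_inverse_carrier ipP cc'.
rewrite (operator_functional opT Tcy Tcy0) (operator_functional opT Tc'y' Tc'y0').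
exact/esym/(dag_adj dag_y0c).
Qed.

Lemma selfadjoint_of_mp_inverse : selfadjoint ip T.
Proof.
apply/seteqP; split=> [[x y] Txy x' y' Tx'y'|[u v] adj_uv]; first exact: graph_symmetric.
have [u1 [u2 [uE [x1 Tx1u1] u2_orth]]] := orth_decomposition hilbP u (ran_subspace subT) Tran.
have Tu20 := orth_ran_sub_ker u2_orth.
have adj_u20 : adj T (u2, 0) by move=> x' y' Tx'y'; apply: graph_symmetric.
have adj_u1v : adj T (u1, v).
  by have := graphB (adjoint_subspace ipP T) adj_uv adj_u20; rewrite subr0 uE addrK.
have v_orth : orth ip (ker T) v.
  by move=> n Tn0; have := adj_uv n 0 Tn0; rewrite /= (ip0l ipP) => <-.
have [x0 Tx0v] := orth_ker_sub_ran v_orth.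
have [_ [e [_ _ Tev ce]]] := graph_ker_decomposition hilbP subT Tcl Tx0v.
suff u1E : u1 = e by rewrite -u1E in Tev; have := graphD subT Tev Tu20; rewrite addr0 -uE.
apply/eqP; rewrite -subr_eq0; apply/eqP; apply: (orth_eq0 ipP (S := ran T)).
  by apply: (subspaceB (ran_subspace subT)); [exists x1 | apply: orth_ker_sub_ran ce.2].
move=> w [x Txw]; rewrite (ipBr ipP) (adj_u1v x w Txw) (graph_symmetric Tev Txw).
exact: subrr.
Qed.

End SelfadjointMPInverse.

End CauchyDual.

Unset Implicit Arguments.

Theorem theorem2p3 (R : realType) (H : lmodType R[i]) (ip : H -> H -> R[i])
    (T : set (H * H)) :
  is_hilbert ip ->
  is_operator T -> densely_defined ip T -> closed_operator ip T ->
  closed_range ip T ->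
  (selfadjoint ip T <-> selfadjoint ip (cauchy_dual ip T)).
Proof.
move=> hilbP opT Tdense Tcl Tran.
have wE := cauchy_dual_eq_mp_inverse hilbP opT Tcl Tran.
split=> [Tsa | wsa].
- rewrite /selfadjoint (wE (mp_inverse_sub_cauchy_dual hilbP opT Tcl Tran Tsa)).
  exact: mp_inverse_selfadjoint.
- have dag_sub p : mp_inverse ip T p -> cauchy_dual ip T p.
    by rewrite wsa; apply: mp_inverse_sub_adjoint_cauchy_dual.
  rewrite /selfadjoint (wE dag_sub) in wsa.
  exact: selfadjoint_of_mp_inverse Tdense wsa.
Qed.
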